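(* For every $\varepsilon>0$ there is $M$ such that for every finite abelian group $F$ of group exponent at least $3$ with $|F|\ge M$, \[\left|\frac{|G_F|^{-1}\sum_{\sigma\in G_F}D_{\rm sym}(\sigma)}{|\mathcal S_F|}-1\right|<\varepsilon ;\] that is, $\lim_{|F|\to\infty}\frac{|G_F|^{-1}\sum_{\sigma\in G_F}D_{\rm sym}(\sigma)}{|\mathcal S_F|}=1$ over the family of finite abelian groups of exponent $\ge 3$, uniformly in the group order.
   Context: Let $F$ be a finite abelian group, written additively; its group exponent is the least $m\ge1$ with $mf=0$ for all $f\in F$. The configuration space is $G_F=\{-1,1\}^F$. The group $\mathcal S_F=\{-1,1\}\times(F\rtimes\{-1,1\})$, where $r\in\{-1,1\}$ acts on $F$ by $f\mapsto rf$, has order $4|F|$ and acts on $G_F$ by $\Phi_{(s,t,r)}(\sigma)_f=s\,\sigma_{rf+t}$ for $s,r\in\{-1,1\}$, $t\in F$. The symmetry-induced degeneracy of $\sigma\in G_F$ is $D_{\rm sym}(\sigma)=|\{\Phi_g(\sigma): g\in\mathcal S_F\}|$, the cardinality of the orbit of $\sigma$. *)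

From HB Require Import structures.
From mathcomp Require Import all_boot all_order all_algebra all_fingroup.
From mathcomp Require Import cyclic.
Set Implicit Arguments. Unset Strict Implicit. Unset Printing Implicit Defensive.
Import GRing.Theory.
Local Open Scope ring_scope.

(* Conventions: a sign in {-1,1} is encoded as a bool, with
   false = +1 and true = -1.  Multiplication of signs is xor (+),
   and r * f for r a sign and f in F is [sgn_act r f]. *)

Definition sgn_act (F : zmodType) (r : bool) (f : F) : F := if r then - f else f.

Lemma gexponent_ex (F : finZmodType) :
  exists m, (0 < m)%N && [forall f : F, f *+ m == 0].
Proof.
exists #|F|; apply/andP; split; first by apply/card_gt0P; exists 0.
apply/forallP => f; apply/eqP.
have := @expg_cardG _ [set: F]%G f (in_setT f).
by rewrite cardsT.
Qed.

Definition gexponent (F : finZmodType) : nat := ex_minn (gexponent_ex F).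

Definition config (F : finZmodType) := {ffun F -> bool}.

(* Symmetry group S_F = {-1,1} x (F ⋊ {-1,1}), elements (s, t, r). *)
Definition symgrp (F : finZmodType) := (bool * F * bool)%type.

Definition Phi (F : finZmodType) (g : symgrp F) (sigma : config F) : config F :=
  [ffun f => g.1.1 (+) sigma (sgn_act g.2 f + g.1.2)].

Definition Dsym (F : finZmodType) (sigma : config F) : nat :=
  #|[set Phi g sigma | g : symgrp F]|.

(* D_sym(sigma) = |S_F| unless some nontrivial g in S_F fixes sigma.  A
   nontrivial g acts on F as f |-> r f + t, a bijection with at most |F|/2 fixed
   points when F has exponent >= 3, and sigma is g-fixed iff
   sigma_f = s sigma_(r f + t) for all f.  Choosing a set A of size >= |F|/6
   disjoint from its image, sigma is determined by its values off A, so g fixes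
   at most 2^(|F| - |F|/6) configurations.  Hence the average of D_sym falls
   short of |S_F| by at most |S_F|^2 2^(-|F|/6), which is o(|S_F|) as |S_F| = 4|F|. *)

From HB Require Import structures.
From mathcomp Require Import all_boot all_order all_algebra all_fingroup.
From mathcomp Require Import reals.
From mathcomp Require Import zify ring.
Import Order.TTheory GRing.Theory Num.Theory.
Set Implicit Arguments. Unset Strict Implicit. Unset Printing Implicit Defensive.
Local Open Scope ring_scope.

Section TwistedInvariant.
Variables (T : finType) (pi : T -> T).

Definition twisted_invariant (s : bool) : {set {ffun T -> bool}} :=
  [set sigma : {ffun T -> bool} | [forall f, sigma f == s (+) sigma (pi f)]].

Definition pi_free (A : {set T}) := [forall f in A, pi f \notin A].

Lemma card_twisted_invariant_pi_free (s : bool) (A : {set T}) :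
  pi_free A -> (#|twisted_invariant s| * 2 ^ #|A| <= 2 ^ #|T|)%N.
Proof.
move=> /forall_inP freeA.
pose restr (sigma : {ffun T -> bool}) := [ffun f => (f \notin A) && sigma f].
have restr_inj : {in twisted_invariant s &, injective restr}.
  move=> s1 s2; rewrite !inE => /forallP inv1 /forallP inv2 eq12.
  have eq_out x : x \notin A -> s1 x = s2 x.
    by move=> xA; move/ffunP/(_ x): eq12; rewrite !ffunE xA.
  apply/ffunP => f; case fA: (f \in A); last by rewrite eq_out ?fA.
  by rewrite (eqP (inv1 f)) (eqP (inv2 f)) eq_out ?freeA.
have restr_on : restr @: twisted_invariant s \subset pffun_on false (~: A) predT.
  apply/subsetP => _ /imsetP[sigma _ ->]; apply/pffun_onP; split=> //.
  by apply/supportP => x; rewrite inE negbK ffunE => ->.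
have := subset_leq_card restr_on.
rewrite card_in_imset // card_pffun_on card_bool => le_inv.
by rewrite -(cardsC A) expnD mulnC leq_mul2l le_inv orbT.
Qed.

(* A maximal pi-free set A satisfies T = A u Fix(pi) u pi(A) u pi^-1(A), so
   |T| <= 3|A| + |T|/2. *)
Lemma exists_big_pi_free (rho : T -> T) :
  cancel pi rho -> (2 * #|[set f | pi f == f]| <= #|T|)%N ->
  exists2 A, pi_free A & (#|T| %/ 6 <= #|A|)%N.
Proof.
move=> piK few_fixed.
have free0 : pi_free set0 by apply/forall_inP => f; rewrite inE.
have [A freeA Amax] := @arg_maxnP {set T} set0 pi_free (fun B => #|B|) free0.
exists A => //.
set Fx := [set f | pi f == f] in few_fixed *.
suff: (#|T| <= 3 * #|A| + #|Fx|)%N by lia.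
have cover : [set: T] \subset (A :|: Fx) :|: (pi @: A :|: rho @: A).
  apply/subsetP => f _.
  case fA: (f \in A); first by rewrite !inE fA.
  case fF: (pi f == f); first by rewrite !inE fF orbT.
  have /forall_inPn[x] : ~~ pi_free (f |: A).
    by apply/negP => /Amax; rewrite cardsU1 fA /=; lia.
  rewrite !inE negbK => /orP[/eqP-> /orP[/eqP pff|pfA]|xA /orP[/eqP pxf|pxA]].
  - by rewrite pff eqxx in fF.
  - by rewrite -[f]piK imset_f ?orbT.
  - by rewrite -pxf imset_f ?orbT.
  - by move/forall_inP: freeA => /(_ x xA); rewrite pxA.
have := subset_leq_card cover; rewrite cardsT => /leq_trans; apply.
have := (leq_card_setU (A :|: Fx) (pi @: A :|: rho @: A)).1.
have := (leq_card_setU A Fx).1.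
have := (leq_card_setU (pi @: A) (rho @: A)).1.
have := leq_imset_card pi A; have := leq_imset_card rho A.
lia.
Qed.

Lemma card_twisted_invariant (rho : T -> T) (s : bool) :
  cancel pi rho -> (2 * #|[set f | pi f == f]| <= #|T|)%N ->
  (#|twisted_invariant s| * 2 ^ (#|T| %/ 6) <= 2 ^ #|T|)%N.
Proof.
move=> piK /(exists_big_pi_free piK)[A freeA bigA].
apply: leq_trans (card_twisted_invariant_pi_free s freeA).
by rewrite leq_mul2l leq_pexp2l ?bigA ?orbT.
Qed.

End TwistedInvariant.

Lemma gexponent_ge3_double_neq0 (F : finZmodType) :
  (3 <= gexponent F)%N -> exists x : F, x + x != 0.
Proof.
move=> exp3; apply/existsP; apply: contraLR exp3; rewrite negb_exists => /forallP dbl0.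
rewrite -leqNgt /gexponent; case: ex_minnP => m _; apply.
by apply/forallP => f; rewrite mulr2n; exact: negbNE (dbl0 f).
Qed.

(* Translation by x maps the solutions of f + f = t to non-solutions. *)
Lemma card_halves (F : finZmodType) (x t : F) : x + x != 0 ->
  (2 * #|[set f : F | (f + f == t)%R]| <= #|F|)%N.
Proof.
move=> x2; set S := [set f : F | (f + f == t)%R].
have disS : [disjoint S & [set x + f | f in S]].
  rewrite disjoints_subset; apply/subsetP => f; rewrite !inE => /eqP ff.
  apply/imsetP => -[f' + ef]; rewrite inE => /eqP f'f'; move: ff.
  rewrite ef -f'f' => /eqP; rewrite addrACA -subr_eq0 addrK; exact/negP.
have := leq_card_setU S [set x + f | f in S]; rewrite disS => -[_ /eqP cardU].
rewrite card_imset in cardU; last exact: addrI.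
by rewrite mul2n -addnn -cardU max_card.
Qed.

Section SignAction.
Variable F : zmodType.

Lemma sgn_actK (r : bool) : involutive (@sgn_act F r).
Proof. by case: r => f; rewrite /= ?opprK. Qed.

Lemma sgn_actB (r : bool) (f g : F) : sgn_act r (f - g) = sgn_act r f - sgn_act r g.
Proof. by case: r; rewrite /= ?opprD. Qed.

Lemma sgn_act_addb (r r' : bool) (f : F) :
  sgn_act (r (+) r') f = sgn_act r (sgn_act r' f).
Proof. by case: r; case: r'; rewrite /= ?opprK. Qed.

End SignAction.

Section Symmetries.
Variable F : finZmodType.

Definition sym1 : symgrp F := (false, 0, false).

Definition Phi_fix (g : symgrp F) := [set sigma : config F | Phi g sigma == sigma].

Lemma Dsym_le (sigma : config F) : (Dsym sigma <= #|{: symgrp F}|)%N.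
Proof. exact: leq_imset_card. Qed.

(* Phi h^-1 Phi g is again some Phi g', with g' = sym1 only if g = h. *)
Lemma Phi_eq_fix {g h : symgrp F} {sigma : config F} :
  g != h -> Phi g sigma = Phi h sigma ->
  exists2 g' : symgrp F, g' != sym1 & sigma \in Phi_fix g'.
Proof.
case: g => [[s t] r]; case: h => [[s' t'] r'] neq eqPhi.
exists (s (+) s', t' - sgn_act (r (+) r') t, r (+) r').
  apply: contra neq => /eqP[ss tt rr].
  have ? : s = s' by apply/eqP; rewrite -negb_add ss.
  have ? : r = r' by apply/eqP; rewrite -negb_add rr.
  by subst; move/eqP: tt; rewrite addbb /= subr_eq0 => /eqP ->.
rewrite inE; apply/eqP/ffunP => u; rewrite ffunE /=.
move/ffunP/(_ (sgn_act r (u - t))): eqPhi; rewrite !ffunE /=.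
rewrite sgn_actK subrK => /(congr1 (addb s)); rewrite addKb => ->.
rewrite addbA; congr (_ (+) sigma _).
by rewrite -sgn_act_addb [r' (+) r]addbC sgn_actB addrA addrAC.
Qed.

Definition stabilised : {set config F} := \bigcup_(g | g != sym1) Phi_fix g.

Lemma Dsym_unstabilised (sigma : config F) :
  sigma \notin stabilised -> Dsym sigma = #|{: symgrp F}|.
Proof.
move=> free; rewrite /Dsym card_imset // => g h eqPhi.
apply/eqP/negPn/negP => neq; have [g' g'1 fixg'] := Phi_eq_fix neq eqPhi.
by case/negP: free; apply/bigcupP; exists g'.
Qed.

Lemma Phi_fix_twisted (s : bool) (t : F) (r : bool) :
  Phi_fix (s, t, r) = twisted_invariant (fun f => sgn_act r f + t) s.
Proof.
apply/setP => sigma; rewrite !inE; apply/eqP/forallP => [fixs f|inv].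
  by rewrite -{1}fixs ffunE.
by apply/ffunP => f; rewrite ffunE; apply/esym/eqP/inv.
Qed.

Lemma card_Phi_fix (g : symgrp F) :
  (3 <= gexponent F)%N -> g != sym1 ->
  (#|Phi_fix g| * 2 ^ (#|F| %/ 6) <= 2 ^ #|F|)%N.
Proof.
move=> exp3; case: g => [[s t] r] g1.
have [/andP[/eqP r0 /eqP t0]|rt] := boolP ((r == false) && (t == 0)).
  have s1 : s = true by move: g1; rewrite r0 t0; case: s; rewrite //= eqxx.
  rewrite (_ : Phi_fix _ = set0) ?cards0 //; apply/setP => sigma.
  rewrite !inE r0 t0 s1; apply/negP => /eqP/ffunP/(_ 0).
  by rewrite ffunE /= addr0; case: (sigma 0).
rewrite Phi_fix_twisted; apply: (@card_twisted_invariant _ _ (fun f => sgn_act r (f - t))).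
  by move=> f; rewrite addrK sgn_actK.
case: r {g1} rt => /= rt.
  have [x x2] := gexponent_ge3_double_neq0 exp3.
  apply: leq_trans (card_halves t x2); rewrite leq_mul2l subset_leq_card ?orbT //.
  by apply/subsetP => f; rewrite !inE => /eqP {1}<-; rewrite addrAC addNr add0r.
suff -> : [set f : F | (f + t)%R == f] = set0 by rewrite cards0.
apply/setP => f.
by rewrite !inE -{2}[f]addr0 (inj_eq (addrI f)) (negbTE rt).
Qed.

End Symmetries.

Lemma card_bigcup_le (I T : finType) (P : pred I) (A : I -> {set T}) :
  (#|\bigcup_(i | P i) A i| <= \sum_(i | P i) #|A i|)%N.
Proof.
elim/big_rec2: _ => [|i B n _ IH]; first by rewrite cards0.
by rewrite (leq_trans (leq_card_setU _ _).1) // leq_add2l.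
Qed.

Section Counting.
Variable F : finZmodType.
Hypothesis exp3 : (3 <= gexponent F)%N.

Let S := #|{: symgrp F}|.
Let N := #|{: config F}|.

Let sum_const_S : (\sum_(sigma : config F) S = S * N)%N.
Proof. by rewrite sum_nat_const mulnC. Qed.

Lemma card_stabilised : (#|stabilised F| * 2 ^ (#|F| %/ 6) <= S * N)%N.
Proof.
apply: leq_trans (leq_mul (card_bigcup_le _ _) (leqnn _)) _.
rewrite big_distrl /=; apply: (@leq_trans (\sum_(g | g != sym1 F) N)).
  by apply: leq_sum => g g1; rewrite /N card_ffun card_bool card_Phi_fix.
by rewrite sum_nat_cond_const leq_mul2r max_card orbT.
Qed.

Lemma sum_Dsym_le : (\sum_(sigma : config F) Dsym sigma <= S * N)%N.
Proof. by rewrite -sum_const_S leq_sum // => sigma _; apply: Dsym_le. Qed.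

Lemma sum_Dsym_deficit :
  ((S * N - \sum_(sigma : config F) Dsym sigma) * 2 ^ (#|F| %/ 6) <= S * S * N)%N.
Proof.
have deficit : (S * N - \sum_(sigma : config F) Dsym sigma <= #|stabilised F| * S)%N.
  rewrite -sum_const_S -sumnB; last by move=> sigma _; apply: Dsym_le.
  rewrite (bigID (mem (stabilised F))) /= [X in (_ + X)%N]big1 ?addn0.
    by rewrite -sum_nat_const leq_sum // => sigma _; rewrite leq_subr.
  by move=> sigma free; rewrite Dsym_unstabilised ?subnn.
apply: leq_trans (leq_mul deficit (leqnn _)) _.
by rewrite mulnAC [in leqRHS]mulnAC leq_mul2r card_stabilised orbT.
Qed.

End Counting.

Lemma sq_le_exp2 m : (4 <= m)%N -> (m * m <= 2 ^ m)%N.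
Proof.
elim: m => // m IH; rewrite leq_eqVlt => /orP[/eqP <- //|m4].
by rewrite expnS; have := IH m4; nia.
Qed.

Lemma linear_le_exp2_div6 (c : nat) :
  exists M : nat, forall n, (M <= n)%N -> (c * n <= 2 ^ (n %/ 6))%N.
Proof.
exists (6 * (11 * c + 4))%N => n bign.
have bigm : (11 * c + 4 <= n %/ 6)%N by rewrite leq_divRL //; lia.
apply: leq_trans (sq_le_exp2 _); last by lia.
have : (n <= 11 * (n %/ 6))%N by lia.
nia.
Qed.

Lemma norm_ratio_sub1_lt (R : realType) (eps a N S P K : R) :
  0 < N -> 0 < S -> 0 < P -> 0 < K ->
  a <= S * N -> (S * N - a) * P <= S * S * N -> S * K <= P -> 1 < eps * K ->
  `| a / N / S - 1 | < eps.
Proof.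
move=> N0 S0 P0 K0 le_a deficit SK_P epsK.
have SN0 : 0 < S * N by rewrite mulr_gt0.
set y := 1 - a / N / S.
have yE : y * (S * N) = S * N - a.
  by rewrite /y mulrBl mul1r; congr (_ - _); field; rewrite ?gt_eqF.
have y0 : 0 <= y.
  by rewrite -(pmulr_lge0 _ SN0) yE subr_ge0.
rewrite distrC ger0_norm //.
have yP : y * P <= S by rewrite -(ler_pM2r SN0) mulrAC yE mulrA.
have yK : y * K <= 1.
  by rewrite -(ler_pM2r P0) mul1r mulrAC (le_trans _ SK_P) // ler_pM2r.
by rewrite -(ltr_pM2r K0) (le_lt_trans yK).
Qed.

Theorem mainTheorem1 (R : realType) (eps : R) :
  0 < eps ->
  exists M : nat, forall F : finZmodType,
    (3 <= gexponent F)%N -> (M <= #|F|)%N ->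
    `| ((\sum_(sigma : config F) (Dsym sigma)%:R) / (#|{: config F}|%:R : R))
         / (#|{: symgrp F}|%:R) - 1 | < eps.
Proof.
move=> eps0.
pose K := Num.bound eps^-1.
have epsK : eps^-1 < K%:R by apply: archi_boundP; rewrite invr_ge0 ltW.
have K0 : 0 < (K%:R : R) by apply: lt_trans epsK; rewrite invr_gt0.
have [M growM] := linear_le_exp2_div6 (4 * K).
exists M => F exp3 bigF.
have F0 : (0 < #|F|)%N by apply/card_gt0P; exists 0.
have cardS : #|{: symgrp F}| = (4 * #|F|)%N by rewrite !card_prod card_bool mulnC mulnA.
have cardN : #|{: config F}| = (2 ^ #|F|)%N by rewrite card_ffun card_bool.
rewrite -natr_sum.
apply: (@norm_ratio_sub1_lt R eps _ _ _ (2 ^ (#|F| %/ 6))%:R K%:R) => //.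
- by rewrite cardN ltr0n expn_gt0.
- by rewrite cardS ltr0n muln_gt0 F0.
- by rewrite ltr0n expn_gt0.
- by rewrite -natrM ler_nat sum_Dsym_le.
- by rewrite -natrM -natrB ?sum_Dsym_le // -!natrM ler_nat sum_Dsym_deficit.
- by rewrite -natrM ler_nat cardS mulnAC growM.
- by rewrite -(ltr_pM2l eps0) mulfV ?gt_eqF in epsK.
Qed.
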